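(* Let $\mathbb{F}$ be any field and let $n\ge 1$, $0\le k\le n$, $s\ge 0$ be integers. The number of distinct zero-patterns of $(n,k,s)$-matrices over $\mathbb{F}$ is at most $\binom{n}{k}^2\cdot n^{20ks/n}$.
   Context: An $(n,k,s)$-matrix over $\mathbb{F}$ is a matrix $M\in\mathbb{F}^{n\times n}$ of rank $k$ with exactly $s$ nonzero entries, which contains rows $R_{i_1},\dots,R_{i_k}$ and columns $C_{j_1},\dots,C_{j_k}$ such that $R_{i_1},\dots,R_{i_k}$ is a basis of the row space of $M$, $C_{j_1},\dots,C_{j_k}$ is a basis of the column space of $M$, and the total number of nonzero entries in the $2k$ vectors $R_{i_1},\dots,R_{i_k},C_{j_1},\dots,C_{j_k}$ is at most $4ks/n$. The zero-pattern of a matrix $M\in\mathbb{F}^{n\times n}$ is the matrix $Z\in\{0,*\}^{n\times n}$ with $Z_{i,j}=0$ if $M_{i,j}=0$ and $Z_{i,j}=*$ otherwise. *)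

From HB Require Import structures.
From mathcomp Require Import all_boot all_order all_algebra.
Set Implicit Arguments. Unset Strict Implicit. Unset Printing Implicit Defensive.
Import Order.TTheory GRing.Theory Num.Theory.
Local Open Scope ring_scope.

Definition nnz (F : fieldType) (m p : nat) (A : 'M[F]_(m, p)) : nat :=
  #|[set ij : 'I_m * 'I_p | A ij.1 ij.2 != 0]|.

(* The rows R_{r t} (t < k) form a basis of the row space,
   the columns C_{c t} (t < k) form a basis of the column space, and the
   total number of nonzero entries in these 2k vectors is <= 4ks/n, written
   multiplied out as (total) * n <= 4 k s. *)
Definition nks_matrix (F : fieldType) (n k s : nat) (M : 'M[F]_n) : Prop :=
  [/\ \rank M = k, nnz M = s &
   exists (r c : 'I_k -> 'I_n),
     [/\ row_free (rowsub r M), (rowsub r M == M)%MS,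
         row_free (colsub c M)^T, ((colsub c M)^T == M^T)%MS &
         ((\sum_(t < k) (nnz (row (r t) M) + nnz (col (c t) M))) * n
            <= 4 * k * s)%N]].

(* zero-pattern: true stands for '*', false for '0' *)
Definition zero_pattern (F : fieldType) (n : nat) (M : 'M[F]_n) : 'M[bool]_n :=
  \matrix_(i, j) (M i j != 0).

From HB Require Import structures.
From mathcomp Require Import all_boot all_order all_algebra.
From mathcomp Require Import mpoly zify.

(* Let [M] be an (n,k,s)-matrix with basic rows [I] and basic columns [J].  An entry
   [(i, j)] outside the rows [I] and the columns [J] is nonzero iff the determinant of
   the submatrix on rows [I + i] and columns [J + j], with its [(i, j)] entry replaced
   by 0, is nonzero: the full bordered minor vanishes since [rank M = k], while the
   minor on [I x J] does not.  These determinants are polynomials of degree at most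
   [k + 1] in the at most [A = 4ks/n] nonzero entries of [M] lying in the rows [I] or
   the columns [J].  So the zero-pattern of [M] is determined by [I], [J], the positions
   of these [A] entries, and the nonzero-pattern of a family of polynomials in [A]
   variables whose total degree is at most [D = (n - k)^2 (k + 1)].  A rank argument in
   the style of Rónyai, Babai and Ganapathy shows that such a family has at most
   [(D + 1)^A] nonzero-patterns.  Altogether there are at most
   [C(n, k)^2 (n^2 + 1)^A (D + 1)^A <= C(n, k)^2 n^(5A)] zero-patterns, and
   [A n <= 4ks]. *)

Set Implicit Arguments. Unset Strict Implicit. Unset Printing Implicit Defensive.
Import GRing.Theory.
Local Open Scope ring_scope.

Section TotalDegree.
Variables (R : comNzRingType) (N : nat).

Definition deg_le (d : nat) (p : {mpoly R[N]}) :=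
  forall m, m \in msupp p -> (mdeg m <= d)%N.

Lemma deg_leW d d' p : (d <= d')%N -> deg_le d p -> deg_le d' p.
Proof. by move=> le_dd' hp m /hp /leq_trans; apply. Qed.

Lemma deg_leC d c : deg_le d c%:MP.
Proof.
by move=> m; rewrite msuppC; case: eqP => // _; rewrite inE => /eqP ->; rewrite mdeg0.
Qed.

Lemma deg_le0 d : deg_le d 0.
Proof. by move=> m; rewrite msupp0. Qed.

Lemma deg_leX i : deg_le 1 'X_i.
Proof. by move=> m; rewrite msuppX inE => /eqP ->; rewrite mdeg1. Qed.

Lemma deg_leD d p q : deg_le d p -> deg_le d q -> deg_le d (p + q).
Proof. by move=> hp hq m /msuppD_le; rewrite mem_cat => /orP [/hp|/hq]. Qed.

Lemma deg_leM d1 d2 p q : deg_le d1 p -> deg_le d2 q -> deg_le (d1 + d2) (p * q).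
Proof.
move=> hp hq m /msuppM_le /allpairsP [[m1 m2] /= [/hp le1 /hq le2 ->]].
by rewrite mdegD leq_add.
Qed.

Lemma deg_le_sum (I : Type) (r : seq I) (P : pred I) d (f : I -> {mpoly R[N]}) :
  (forall i, P i -> deg_le d (f i)) -> deg_le d (\sum_(i <- r | P i) f i).
Proof.
move=> hf; elim/big_rec: _ => [|i p Pi hp]; first exact: deg_le0.
exact: deg_leD (hf i Pi) hp.
Qed.

Lemma deg_le_prod (I : Type) (r : seq I) (P : pred I) (d : I -> nat)
    (f : I -> {mpoly R[N]}) :
  (forall i, P i -> deg_le (d i) (f i)) ->
  deg_le (\sum_(i <- r | P i) d i) (\prod_(i <- r | P i) f i).
Proof.
move=> hf; elim/big_rec2: _ => [|i e p Pi hp]; first by rewrite -mpolyC1; apply: deg_leC.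
exact: deg_leM (hf i Pi) hp.
Qed.

Lemma deg_le_det k (Q : 'M[{mpoly R[N]}]_k) :
  (forall a b, deg_le 1 (Q a b)) -> deg_le k (\det Q).
Proof.
move=> hQ; apply: deg_le_sum => s _; rewrite -[k in deg_le k _]add0n.
apply: deg_leM; first by rewrite -(rmorph_sign (@mpolyC N R)); apply: deg_leC.
apply: (@deg_leW (\sum_(i < k) 1)%N); first by rewrite sum1_card card_ord.
by apply: deg_le_prod => i _; apply: hQ.
Qed.

End TotalDegree.

Section MonomialExpansion.
Variables (R : comNzRingType) (N D : nat).

Definition mnm_of_ffun (u : {ffun 'I_N -> 'I_D.+1}) : 'X_{1..N} :=
  [multinom (u i : nat) | i < N].

Lemma mnm_of_ffun_inj : injective mnm_of_ffun.
Proof.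
move=> u v /mnmP huv; apply/ffunP => i; apply/val_inj.
by have := huv i; rewrite !mnmE.
Qed.

(* All exponents in [p] are at most [D], so its monomials are indexed by
   [{ffun 'I_N -> 'I_D.+1}]. *)
Lemma meval_deg_le (p : {mpoly R[N]}) x : deg_le D p ->
  p.@[x] = \sum_(u : {ffun 'I_N -> 'I_D.+1}) p@_(mnm_of_ffun u) * \prod_i x i ^+ u i.
Proof.
move=> hp; pose G (m : 'X_{1..N}) := p@_m * \prod_i x i ^+ m i.
have GE u : G (mnm_of_ffun u) = p@_(mnm_of_ffun u) * \prod_i x i ^+ u i.
  by congr (_ * _); apply: eq_bigr => i _; rewrite mnmE.
rewrite -(eq_bigr _ (fun u _ => GE u)) mevalE.
rewrite (bigID (fun u => mnm_of_ffun u \in msupp p)) /= [X in _ + X]big1 ?addr0;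
  last by move=> u /memN_msupp_eq0; rewrite /G => ->; rewrite mul0r.
rewrite -[RHS]big_filter -[RHS](big_map _ xpredT G); apply: perm_big; apply: uniq_perm.
- exact: msupp_uniq.
- by rewrite map_inj_uniq ?filter_uniq ?index_enum_uniq //; apply: mnm_of_ffun_inj.
move=> m; apply/idP/idP => [m_supp|/mapP [u]]; last by rewrite mem_filter => /andP [? _] ->.
have lt_m i : (m i < D.+1)%N.
  by rewrite ltnS (leq_trans _ (hp _ m_supp)) // mdegE (bigD1 i) //= leq_addr.
pose u := [ffun i => Ordinal (lt_m i)].
have def_m : m = mnm_of_ffun u by apply/mnmP => i; rewrite mnmE ffunE.
by apply/mapP; exists u; rewrite // mem_filter -def_m m_supp mem_index_enum.
Qed.

End MonomialExpansion.

Section NonzeroPatterns.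
Variables (F : fieldType) (N : nat).

Definition nonzero_set (I : finType) (f : I -> {mpoly F[N]}) (x : 'I_N -> F) : {set I} :=
  [set i | (f i).@[x] != 0].

Lemma mxrank_meval_le D L L' (g : 'I_L -> {mpoly F[N]}) (x : 'I_L' -> 'I_N -> F) :
  (forall l, deg_le D (g l)) -> (\rank (\matrix_(l, l') (g l).@[x l']) <= D.+1 ^ N)%N.
Proof.
move=> hg; pose Mon := {ffun 'I_N -> 'I_D.+1}.
pose coefs : 'M[F]_(L, #|{: Mon}|) :=
  \matrix_(l, u) (g l)@_(mnm_of_ffun (enum_val u)).
pose monos : 'M[F]_(#|{: Mon}|, L') :=
  \matrix_(u, l') \prod_i x l' i ^+ (enum_val u : Mon) i.
have -> : \matrix_(l, l') (g l).@[x l'] = coefs *m monos.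
  apply/matrixP => l l'; rewrite !mxE (meval_deg_le _ (hg l)).
  rewrite (eq_bigl (mem {: Mon})) // big_enum_val /=.
  by apply: eq_bigr => u _; rewrite !mxE.
rewrite (leq_trans (mxrankM_maxl _ _)) // (leq_trans (rank_leq_col _)) //.
by rewrite card_ffun !card_ord.
Qed.

(* Order the points by the size of their nonzero sets: the product over a minimal
   nonzero set with nonzero coefficient vanishes at every other point. *)
Lemma row_free_meval_nonzero_prod (I : finType) (f : I -> {mpoly F[N]}) L
    (x : 'I_L -> 'I_N -> F) :
  injective (fun l => nonzero_set f (x l)) ->
  row_free (\matrix_(l, l') (\prod_(i in nonzero_set f (x l)) f i).@[x l']).
Proof.
move=> inj_x; apply/inj_row_free => v v_ker; apply/rowP => l1; rewrite mxE.
apply/eqP/negPn/negP => v_l1.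
have [l v_l min_l] :=
  arg_minnP (fun l => #|nonzero_set f (x l)|) (v_l1 : (fun l => v 0 l != 0) l1).
have := congr1 (fun w : 'rV_L => w 0 l) v_ker; rewrite !mxE (bigD1 l) //=.
rewrite big1 ?addr0 => [|l' l'_neq]; apply/eqP.
  by rewrite mxE rmorph_prod mulf_neq0 //; apply/prodf_neq0 => i; rewrite inE.
have [-> | v_l'] := eqVneq (v 0 l') 0; first by rewrite mul0r.
rewrite mxE rmorph_prod mulf_eq0 (negbTE v_l') /=.
apply/negPn/negP => /prodf_neq0 nz_l.
have sub_l' : nonzero_set f (x l') \subset nonzero_set f (x l).
  by apply/subsetP => i /nz_l; rewrite inE.
move/eqP: l'_neq; apply; apply: inj_x; apply/eqP.
by rewrite eqEcard sub_l' min_l.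
Qed.

Lemma card_nonzero_sets_le D (I : finType) (f : I -> {mpoly F[N]}) L
    (x : 'I_L -> 'I_N -> F) :
  (forall S : {set I}, deg_le D (\prod_(i in S) f i)) ->
  injective (fun l => nonzero_set f (x l)) -> (L <= D.+1 ^ N)%N.
Proof.
move=> deg_f /row_free_meval_nonzero_prod /eqP <-.
by apply: mxrank_meval_le => l; apply: deg_f.
Qed.

End NonzeroPatterns.

Section BorderedMinor.

Definition extend (T : Type) k (f : 'I_k -> T) (x : T) (a : 'I_k.+1) : T :=
  if unlift ord_max a is Some t then f t else x.

Definition bordered_mx (R : Type) m p k (e : 'I_m -> 'I_p -> R)
    (r : 'I_k -> 'I_m) (c : 'I_k -> 'I_p) (i : 'I_m) (j : 'I_p) : 'M[R]_k.+1 :=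
  \matrix_(a, b) e (extend r i a) (extend c j b).

Definition zero_corner (R : nmodType) k (B : 'M[R]_k.+1) : 'M[R]_k.+1 :=
  \matrix_(a, b) if (a == ord_max) && (b == ord_max) then 0 else B a b.

Lemma det_zero_corner (R : comNzRingType) k (B : 'M[R]_k.+1) :
  \det B = \det (zero_corner B) + B ord_max ord_max * \det (row' ord_max (col' ord_max B)).
Proof.
rewrite (expand_det_row B ord_max) (expand_det_row (zero_corner B) ord_max).
rewrite [LHS](bigD1 ord_max) // [X in _ = X + _](bigD1 ord_max) //=.
rewrite addrC !mxE eqxx mul0r add0r; congr (_ + _).
  apply: eq_bigr => b /negbTE b_neq; rewrite mxE eqxx b_neq; congr (_ * _).
  rewrite /cofactor; congr (_ * \det _); apply/matrixP => a b'.
  by rewrite !mxE [lift _ _ == _]eq_sym (negbTE (neq_lift _ _)).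
by rewrite /cofactor -signr_odd addnn odd_double expr0 mul1r.
Qed.

Variable F : fieldType.

Lemma inj_row_free_rowsub m m' p (f : 'I_m' -> 'I_m) (A : 'M[F]_(m, p)) :
  row_free (rowsub f A) -> injective f.
Proof.
move=> free_fA t1 t2 f_eq.
have : delta_mx 0 t1 *m rowsub f A = delta_mx (0 : 'I_1) t2 *m rowsub f A.
  by rewrite -!rowE; apply/rowP => b; rewrite !mxE f_eq.
move/(row_free_inj free_fA)/matrixP/(_ 0 t1); rewrite !mxE !eqxx /=.
by case: eqP => // _ /eqP; rewrite oner_eq0.
Qed.

Lemma row_free_rowsub_span m p k (r : 'I_k -> 'I_m) (A : 'M[F]_(m, p)) :
  \rank A = k -> (A <= rowsub r A)%MS -> row_free (rowsub r A).
Proof.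
move=> rkA sub_rA; rewrite -row_leq_rank -{1}rkA.
exact: mxrankS.
Qed.

Lemma submx_rowsub_range m m1 m2 p (f : 'I_m1 -> 'I_m) (g : 'I_m2 -> 'I_m)
    (A : 'M[F]_(m, p)) :
  (forall t, exists u, f t = g u) -> (rowsub f A <= rowsub g A)%MS.
Proof.
move=> fg; apply/row_subP => t; rewrite row_rowsub.
by have [u ->] := fg t; rewrite -row_rowsub row_sub.
Qed.

Lemma mxrank_mxsub m m' p p' (f : 'I_m' -> 'I_m) (g : 'I_p' -> 'I_p)
    (A : 'M[F]_(m, p)) :
  (\rank (mxsub f g A) <= \rank A)%N.
Proof.
rewrite mxsubrc rowsubE (leq_trans (mxrankM_maxr _ _)) //.
by rewrite -[A in colsub _ A]mulmx1 -mulmx_colsub mxrankM_maxl.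
Qed.

(* The columns [c] span the column space of [M], so the [k x k] minor on rows [r] and
   columns [c] is invertible, while the bordered [(k+1) x (k+1)] minor has rank at most
   [k]; expanding its determinant along the corner entry gives the claim. *)
Lemma nonzero_entry_det_bordered m p k (M : 'M[F]_(m, p)) (r : 'I_k -> 'I_m)
    (c : 'I_k -> 'I_p) i j :
  \rank M = k -> (M <= rowsub r M)%MS -> (M^T <= rowsub c M^T)%MS ->
  (M i j != 0) = (\det (zero_corner (bordered_mx M r c i j)) != 0).
Proof.
move=> rkM sub_r sub_c; set B := bordered_mx M r c i j.
have detB : \det B = 0.
  apply/eqP; apply: contraT; rewrite -unitfE -unitmxE => /mxrank_unit rkB.
  have := mxrank_mxsub (extend r i) (extend c j) M.
  have -> : mxsub (extend r i) (extend c j) M = B by apply/matrixP => a b; rewrite !mxE.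
  by rewrite rkB rkM ltnn.
have minorB : row' ord_max (col' ord_max B) = rowsub r (colsub c M).
  by apply/matrixP => a b; rewrite !mxE /extend !liftK.
have detA : \det (rowsub r (colsub c M)) != 0.
  have [X defMT] := submxP sub_c.
  have defM : M = colsub c M *m X^T.
    by apply: trmx_inj; rewrite trmx_mul trmxK trmx_mxsub.
  have : \rank (rowsub r M) = k by apply/eqP; apply: row_free_rowsub_span.
  rewrite [in rowsub r M]defM -mul_rowsub_mx => rk_rM.
  rewrite -unitfE -unitmxE -row_free_unit -row_leq_rank -{1}rk_rM.
  exact: mxrankM_maxl.
move: detB; rewrite det_zero_corner minorB [B _ _]mxE /extend unlift_none.
move/eqP; rewrite addr_eq0 => /eqP ->.
by rewrite oppr_eq0 mulf_eq0 negb_or detA andbT.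
Qed.

End BorderedMinor.

Lemma card_bigcup_le (I T : finType) (B : I -> {set T}) :
  (#|\bigcup_i B i| <= \sum_i #|B i|)%N.
Proof.
elim/big_rec2: _ => [|i n U _ le_U]; first by rewrite cards0.
by rewrite (leq_trans (leq_card_setU _ _)) // leq_add2l.
Qed.

Lemma card_support_rows_cols (F : fieldType) m p k (M : 'M[F]_(m, p))
    (r : 'I_k -> 'I_m) (c : 'I_k -> 'I_p) :
  (#|[set q : 'I_m * 'I_p |
        (M q.1 q.2 != 0%R) && ((q.1 \in r @: setT) || (q.2 \in c @: setT))]|
    <= \sum_t (nnz (row (r t) M) + nnz (col (c t) M)))%N.
Proof.
pose in_row t := [set q : 'I_m * 'I_p | (q.1 == r t) && (M q.1 q.2 != 0)].
pose in_col t := [set q : 'I_m * 'I_p | (q.2 == c t) && (M q.1 q.2 != 0)].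
apply: (@leq_trans #|\bigcup_t (in_row t :|: in_col t)|).
  apply/subset_leq_card/subsetP => -[a b]; rewrite inE /= => /andP [Mab].
  case/orP => /imsetP [t _ eq_t]; apply/bigcupP; exists t => //.
    by rewrite !inE /= Mab eq_t eqxx.
  by rewrite !inE /= Mab eq_t eqxx orbT.
apply: leq_trans (card_bigcup_le _) _; apply: leq_sum => t _.
apply: leq_trans (leq_card_setU _ _) (leq_add _ _).
  apply: leq_trans (leq_imset_card (fun q : 'I_1 * 'I_p => (r t, q.2)) _).
  apply/subset_leq_card/subsetP => -[a b]; rewrite inE /= => /andP [/eqP -> Mab].
  by apply/imsetP; exists (0, b); rewrite // inE mxE.
apply: leq_trans (leq_imset_card (fun q : 'I_m * 'I_1 => (q.1, c t)) _).
apply/subset_leq_card/subsetP => -[a b]; rewrite inE /= => /andP [/eqP -> Mab].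
by apply/imsetP; exists (a, 0); rewrite // inE mxE.
Qed.

Definition listed (T : finType) A (phi : {ffun 'I_A -> option T}) : {set T} :=
  [set q | [exists t, phi t == Some q]].

Lemma exists_listing (T : finType) A (U : {set T}) :
  (#|U| <= A)%N -> exists phi : {ffun 'I_A -> option T}, U = listed phi.
Proof.
move=> card_U; exists [ffun t : 'I_A => nth None (map Some (enum U)) t].
apply/setP => q; rewrite inE; apply/idP/existsP => [q_U|[t]].
  have lt_q : (index q (enum U) < A)%N.
    by apply: leq_trans card_U; rewrite cardE index_mem mem_enum.
  exists (Ordinal lt_q); rewrite ffunE (nth_map q) ?nth_index ?index_mem ?mem_enum //.
rewrite ffunE; case: (ltnP t (size (enum U))) => [lt_t|le_t];
  last by rewrite nth_default ?size_map.
by rewrite (nth_map q) // => /eqP [<-]; rewrite -mem_enum mem_nth.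
Qed.

Section EnumerateSet.
Variables (n k : nat) (d : 'I_n).

Definition enum_at (I : {set 'I_n}) (t : 'I_k) : 'I_n := nth d (enum I) t.

Lemma mem_enum_at (I : {set 'I_n}) (t : 'I_k) : #|I| = k -> enum_at I t \in I.
Proof. by move=> card_I; rewrite -mem_enum mem_nth // -cardE card_I. Qed.

Lemma enum_at_onto (I : {set 'I_n}) y : #|I| = k -> y \in I -> exists t, y = enum_at I t.
Proof.
move=> card_I y_I; have lt_y : (index y (enum I) < k)%N.
  by rewrite -card_I cardE index_mem mem_enum.
by exists (Ordinal lt_y); rewrite /enum_at nth_index ?mem_enum.
Qed.

End EnumerateSet.

Section Parametrization.
Variables (F : fieldType) (n k A : nat) (d : 'I_n).
Local Notation enum_at := (@enum_at n k d).

Definition var_at (phi : {ffun 'I_A -> option ('I_n * 'I_n)}) (a b : 'I_n) :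
    {mpoly F[A]} :=
  if [pick t | phi t == Some (a, b)] is Some t then 'X_t else 0.

Definition border_poly (I J : {set 'I_n}) phi (q : 'I_n * 'I_n) : {mpoly F[A]} :=
  if (q.1 \in I) || (q.2 \in J) then 1
  else \det (zero_corner (bordered_mx (var_at phi) (enum_at I) (enum_at J) q.1 q.2)).

Definition pattern_of (I J : {set 'I_n}) (phi : {ffun 'I_A -> option ('I_n * 'I_n)})
    (S : {set 'I_n * 'I_n}) : 'M[bool]_n :=
  \matrix_(i, j) if (i \in I) || (j \in J) then (i, j) \in listed phi else (i, j) \in S.

Lemma deg_le_prod_border_poly (I J : {set 'I_n}) phi (S : {set 'I_n * 'I_n}) :
  #|I| = k -> #|J| = k ->
  deg_le ((n - k) * (n - k) * k.+1) (\prod_(q in S) border_poly I J phi q).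
Proof.
move=> card_I card_J.
pose deg (q : 'I_n * 'I_n) := if (q.1 \in I) || (q.2 \in J) then 0%N else k.+1.
apply: (@deg_leW _ _ (\sum_(q in S) deg q)); last first.
  apply: deg_le_prod => q _; rewrite /deg /border_poly; case: ifP => _.
    by rewrite -mpolyC1; apply: deg_leC.
  apply: deg_le_det => a b; rewrite !mxE; case: ifP => _; first exact: deg_le0.
  by rewrite /var_at; case: pickP => [t _|_]; [apply: deg_leX | apply: deg_le0].
have card_C (X : {set 'I_n}) : #|X| = k -> #|~: X| = (n - k)%N.
  by move=> card_X; rewrite cardsCs setCK card_ord card_X.
apply: (@leq_trans (\sum_q deg q)); first by rewrite [leqRHS](bigID (mem S)) leq_addr.
rewrite (bigID (mem (setX (~: I) (~: J)))) /= [X in (_ + X)%N]big1 => [|[a b]]; last first.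
  by rewrite in_setX !inE /deg negb_and !negbK => /orP [] ->; rewrite ?orbT.
rewrite addn0 (eq_bigr (fun _ => k.+1)) => [|[a b]]; last first.
  by rewrite in_setX !inE /deg => /andP [/negbTE -> /negbTE ->].
by rewrite sum_nat_const cardsX !card_C.
Qed.

(* [phi] lists the positions of the nonzero entries of [M] in the rows [I] or the
   columns [J], and [x] gives their values. *)
Lemma zero_pattern_parametrize (M : 'M[F]_n) (r c : 'I_k -> 'I_n) :
  \rank M = k -> (M <= rowsub r M)%MS -> (M^T <= rowsub c M^T)%MS ->
  (\sum_t (nnz (row (r t) M) + nnz (col (c t) M)) <= A)%N ->
  exists (I J : {set 'I_n}) phi (x : 'I_A -> F), [/\ #|I| = k, #|J| = k &
    zero_pattern M = pattern_of I J phi (nonzero_set (border_poly I J phi) x)].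
Proof.
move=> rkM sub_r sub_c card_supp.
have inj_r := inj_row_free_rowsub (row_free_rowsub_span rkM sub_r).
have rkMT : \rank M^T = k by rewrite mxrank_tr.
have inj_c := inj_row_free_rowsub (row_free_rowsub_span rkMT sub_c).
set I := r @: setT; set J := c @: setT.
have card_I : #|I| = k by rewrite card_imset // cardsT card_ord.
have card_J : #|J| = k by rewrite card_imset // cardsT card_ord.
have [phi suppE] := exists_listing (leq_trans (card_support_rows_cols M r c) card_supp).
pose x t := if phi t is Some q then M q.1 q.2 else 0.
have var_atE a b : (a \in I) || (b \in J) -> (var_at phi a b).@[x] = M a b.
  rewrite /var_at; case: pickP => [t /eqP phi_t|no_t] in_IJ.
    by rewrite mevalXU /x phi_t.
  rewrite meval0; apply/esym/eqP; apply: contraT => Mab.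
  have : (a, b) \in listed phi by rewrite -suppE inE Mab.
  by rewrite inE => /existsP [t]; rewrite no_t.
have sub_enum (f : 'I_k -> 'I_n) (B : 'M[F]_n) :
    injective f -> (rowsub f B <= rowsub (enum_at (f @: setT)) B)%MS.
  move=> inj_f; apply: submx_rowsub_range => t; apply: enum_at_onto; last exact: imset_f.
  by rewrite card_imset // cardsT card_ord.
have sub_rI : (M <= rowsub (enum_at I) M)%MS := submx_trans sub_r (sub_enum r M inj_r).
have sub_cJ : (M^T <= rowsub (enum_at J) M^T)%MS :=
  submx_trans sub_c (sub_enum c M^T inj_c).
exists I, J, phi, x; split=> //; apply/matrixP => i j; rewrite !mxE.
case: ifP => in_IJ; first by rewrite -suppE inE /= in_IJ andbT.
rewrite inE /border_poly /= in_IJ -det_map_mx.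
rewrite (nonzero_entry_det_bordered i j rkM sub_rI sub_cJ).
congr (\det _ != 0); apply/matrixP => a b; rewrite !mxE.
case: ifP => [_|not_corner]; first by rewrite rmorph0.
rewrite -[RHS]/((var_at phi _ _).@[x]) var_atE // /extend.
case: unliftP => [a' _|a_max]; first by rewrite mem_enum_at.
case: unliftP => [b' _|b_max]; first by rewrite mem_enum_at ?orbT.
by move: not_corner; rewrite a_max b_max !eqxx.
Qed.

End Parametrization.

Lemma card_zero_patterns_le (F : fieldType) n k s (P : {set 'M[bool]_n}) :
  (0 < n)%N ->
  (forall Z, Z \in P -> exists M : 'M[F]_n, nks_matrix k s M /\ zero_pattern M = Z) ->
  (#|P| <= 'C(n, k) ^ 2 *
     ((n * n).+1 * ((n - k) * (n - k) * k.+1).+1) ^ (4 * k * s %/ n))%N.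
Proof.
move=> n_gt0 realP; set A := (4 * k * s %/ n)%N; pose d := Ordinal n_gt0.
pose Param := ({set 'I_n} * {set 'I_n} * {ffun 'I_A -> option ('I_n * 'I_n)})%type.
pose k_sets := [set X : {set 'I_n} | #|X| == k].
pose good : {set Param} := setX (setX k_sets k_sets) setT.
pose pat (p : Param) x :=
  pattern_of p.1.1 p.1.2 p.2 (nonzero_set (border_poly F k d p.1.1 p.1.2 p.2) x).
have /fin_all_exists [g realized] : forall Z : 'M[bool]_n,
    exists px : Param * ('I_A -> F), Z \in P -> px.1 \in good /\ Z = pat px.1 px.2.
  move=> Z; case: (boolP (Z \in P)) => [/realP [M [nksM <-]] | _]; last first.
    by exists ((set0, set0, [ffun => None]), fun => 0).
  case: nksM => rkM _ [r [c [_ /andP [_ sub_r] _ /andP [_ sub_c] supp]]].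
  rewrite trmx_mxsub in sub_c; move: supp; rewrite -leq_divRL // => supp.
  have [I [J [phi [x [card_I card_J ->]]]]] :=
    zero_pattern_parametrize d rkM sub_r sub_c supp.
  by exists ((I, J, phi), x) => _; rewrite !in_setX !inE card_I card_J !eqxx.
rewrite -sum1_card (partition_big (fun Z => (g Z).1) (mem good)) /=; last first.
  by move=> Z /realized [].
apply: (@leq_trans (\sum_(p in good) ((n - k) * (n - k) * k.+1).+1 ^ A)); last first.
  rewrite sum_nat_const !cardsX cardsT card_ffun card_option card_prod !card_ord.
  by rewrite card_draws card_ord expnMn mulnA.
apply: leq_sum => p good_p.
rewrite (eq_bigl (fun Z => Z \in [set Z in P | (g Z).1 == p])) => [|Z]; last by rewrite inE.
rewrite sum1_card; set Pp := [set Z in P | _].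
have patE (l : 'I_#|Pp|) : enum_val l = pat p (g (enum_val l)).2.
  have := enum_valP l; rewrite inE => /andP [/realized [_ def_Z] /eqP g_l].
  by rewrite {1}def_Z g_l.
apply: (card_nonzero_sets_le (f := border_poly F k d p.1.1 p.1.2 p.2)
  (x := fun l : 'I_#|Pp| => (g (enum_val l)).2)).
  move: good_p; rewrite !inE => /andP [/andP [/eqP card_I /eqP card_J] _] S.
  exact: deg_le_prod_border_poly.
by move=> l1 l2 eq_nz; apply: enum_val_inj; rewrite patE [RHS]patE /pat eq_nz.
Qed.

Lemma amgm_nat a b : (4 * (a * b) <= (a + b) ^ 2)%N.
Proof.
have [le_ab|lt_ba] := leqP a b.
  by rewrite -(subnKC le_ab); set e := (b - a)%N; nia.
by rewrite -(subnKC (ltnW lt_ba)); set e := (a - b)%N; nia.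
Qed.

Lemma pattern_base_le n k : (2 <= n)%N -> (k <= n)%N ->
  ((n * n).+1 * ((n - k) * (n - k) * k.+1).+1 <= n ^ 5)%N.
Proof.
move=> n_ge2 le_kn.
have : (4 * ((n - k) * (n - k) * k.+1) <= n * n.+1 ^ 2)%N.
  rewrite -mulnA mulnCA; apply: leq_mul; first exact: leq_subr.
  by rewrite -[in n.+1](subnK le_kn) -addnS amgm_nat.
move: ((n - k) * (n - k) * k.+1)%N => q le_q.
have le_4q : (4 * q.+1 <= n * n.+1 ^ 2 + 4)%N by lia.
rewrite -(leq_pmul2l (isT : (0 < 4)%N)) mulnCA.
apply: leq_trans (leq_mul (leqnn _) le_4q) _.
have [t ->] : exists t, n = (t + 2)%N by exists (n - 2)%N; lia.
by rewrite !expnS expn0; nia.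
Qed.

Lemma zero_pattern_1x1 (F : fieldType) (M : 'M[F]_1) :
  zero_pattern M = \matrix_(i, j) (\rank M != 0%N).
Proof.
apply/matrixP => i j; rewrite !mxE !ord1 mxrank_eq0; congr negb.
apply/eqP/eqP => [M00|->]; last by rewrite mxE.
by apply/matrixP => a b; rewrite !ord1 M00 mxE.
Qed.

Theorem lemma2p3 (F : fieldType) (n k s : nat) :
  (1 <= n)%N -> (k <= n)%N ->
  forall P : {set 'M[bool]_n},
    (forall Z, Z \in P -> exists M : 'M[F]_n, nks_matrix k s M /\ zero_pattern M = Z) ->
    (#|P| ^ n <= ('C(n, k) ^ 2) ^ n * n ^ (20 * k * s))%N.
Proof.
move=> n_gt0 le_kn P realP.
have [n_gt1|n_le1] := ltnP 1 n; last first.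
  have n1 : n = 1%N by apply/anti_leq/andP.
  subst n; have -> : 'C(1, k) = 1%N.
    by move: le_kn; rewrite leq_eqVlt ltnS leqn0 => /orP [] /eqP ->.
  rewrite !exp1n !expn1 mul1n.
  apply/card_le1_eqP => _ _ /realP [M1 [[rk1 _ _] <-]] /realP [M2 [[rk2 _ _] <-]].
  by rewrite !zero_pattern_1x1 rk1 rk2.
have card_P := card_zero_patterns_le n_gt0 realP.
set A := (4 * k * s %/ n)%N in card_P.
apply: leq_trans (_ : _ <= ('C(n, k) ^ 2 * (n ^ 5) ^ A) ^ n)%N _.
  rewrite leq_exp2r // (leq_trans card_P) // leq_mul //.
  by case: (A) => // e; rewrite leq_exp2r // pattern_base_le.
rewrite expnMn leq_mul // -!expnM leq_pexp2l //.
by have := leq_divM (4 * k * s) n; rewrite -/A; nia.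
Qed.
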